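(* Let $p\ge3$ and let $n_1\ge n_2\ge\dots\ge n_p\ge1$ be positive integers such that $n_1+\sum_{i=2}^p\sigma_in_i=0$ for some $\sigma_2,\dots,\sigma_p\in\{-1,0,1\}$. Then for every $0<\alpha<1$, $$\sum_{i=2}^pn_i^\alpha-n_1^\alpha\ge(2-2^\alpha)\sum_{i=3}^pn_i^\alpha.$$ *)

From Stdlib Require Export Reals ZArith List Lra Lia.
Open Scope R_scope.

From Stdlib Require Import Reals ZArith List Lra Lia.
Open Scope R_scope.

(* Write rest = {3,...,p}.  Since every sigma_i lies in
   {-1,0,1}, the relation n_1 = - sum_{i>=2} sigma_i n_i gives the triangle
   bound n_1 <= n_2 + sum_{i in rest} n_i, and as x |-> x^alpha is increasing,
   n_1^alpha <= (n_2 + sum_rest n_i)^alpha.  The heart of the argument is the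
   concavity estimate
       (a + b)^alpha <= a^alpha + (2^alpha - 1) b^alpha      for 0 < b <= a,
   which holds because the increments x |-> (x+d)^alpha - x^alpha are
   non-increasing (mean value theorem; the derivative alpha x^(alpha-1) is
   decreasing).  Absorbing the n_i, i in rest, one at a time into a (starting
   from a = n_2; each n_i <= n_2 <= a by monotonicity of n) yields
       (n_2 + sum_rest n_i)^alpha <= n_2^alpha + (2^alpha - 1) sum_rest n_i^alpha,
   and rearranging gives the theorem. *)

Lemma Rpower_antitone_nonpos_exponent x y c :
  0 < x <= y -> c <= 0 -> Rpower y c <= Rpower x c.
Proof.
  intros Hxy Hc.
  rewrite <- (Ropp_involutive c), (Rpower_Ropp y), (Rpower_Ropp x).
  apply Rinv_le_contravar; [unfold Rpower; apply exp_pos |].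
  apply Rle_Rpower_l; lra.
Qed.

Lemma Rpower_increment_antitone a d u v :
  0 <= a <= 1 -> 0 <= d -> 0 < u <= v ->
  Rpower (v + d) a - Rpower v a <= Rpower (u + d) a - Rpower u a.
Proof.
  intros Ha Hd Huv.
  destruct (Req_dec u v) as [<- | Hne]; [lra |].
  set (phi := fun x => Rpower (x + d) a - Rpower x a).
  set (dphi := fun x => a * Rpower (x + d) (a - 1) - a * Rpower x (a - 1)).
  destruct (MVT_cor2 phi dphi u v ltac:(lra)) as [c [Hmvt Hc]].
  - intros c Hc; unfold phi, dphi.
    apply derivable_pt_lim_minus; [| apply derivable_pt_lim_power; lra].
    replace (a * Rpower (c + d) (a - 1))
      with (a * Rpower (c + d) (a - 1) * 1) by ring.
    apply (derivable_pt_lim_comp (fun x => x + d) (fun x => Rpower x a)).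
    + replace 1 with (1 + 0) by ring.
      apply derivable_pt_lim_plus;
        [apply derivable_pt_lim_id | apply derivable_pt_lim_const].
    + apply derivable_pt_lim_power; lra.
  - assert (Hdphi : dphi c <= 0).
    { assert (Rpower (c + d) (a - 1) <= Rpower c (a - 1))
        by (apply Rpower_antitone_nonpos_exponent; lra).
      unfold dphi; nra. }
    unfold phi in Hmvt; nra.
Qed.

(* The concavity estimate: adding b <= a to a raises a^alpha by at most
   (2^alpha - 1) b^alpha, with equality at b = a. *)
Lemma Rpower_add_le a b alpha :
  0 <= alpha <= 1 -> 0 < b <= a ->
  Rpower (a + b) alpha <= Rpower a alpha + (Rpower 2 alpha - 1) * Rpower b alpha.
Proof.
  intros Halpha Hba.
  pose proof (Rpower_increment_antitone alpha (a - b) b (2 * b) Halpha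
                ltac:(lra) ltac:(lra)) as Hinc.
  replace (2 * b + (a - b)) with (a + b) in Hinc by ring.
  replace (b + (a - b)) with a in Hinc by ring.
  rewrite <- Rpower_mult_distr in Hinc by lra.
  lra.
Qed.

Definition Rsum (l : list R) : R := fold_right Rplus 0 l.

Lemma Rpower_add_list_le alpha (l : list R) :
  0 <= alpha <= 1 ->
  forall a, (forall x, In x l -> 0 < x <= a) ->
  Rpower (a + Rsum l) alpha
    <= Rpower a alpha + (Rpower 2 alpha - 1) * Rsum (map (fun x => Rpower x alpha) l).
Proof.
  intros Halpha; induction l as [| x l IH]; intros a Hl; simpl.
  - rewrite Rplus_0_r; lra.
  - assert (Hx : 0 < x <= a) by (apply Hl; left; reflexivity).
    replace (a + (x + Rsum l)) with ((a + x) + Rsum l) by ring.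
    eapply Rle_trans.
    + apply IH; intros y Hy.
      pose proof (Hl y (or_intror Hy)); lra.
    + pose proof (Rpower_add_le a x alpha Halpha Hx); lra.
Qed.

Lemma nonincreasing_on (p : nat) (n : nat -> nat) :
  (forall i, (1 <= i)%nat -> (i < p)%nat -> (n (S i) <= n i)%nat) ->
  forall i j, (1 <= i)%nat -> (i <= j)%nat -> (j <= p)%nat -> (n j <= n i)%nat.
Proof.
  intros Hstep i j Hi Hij Hj.
  induction Hij as [| j Hij IH]; [lia |].
  pose proof (Hstep j ltac:(lia) ltac:(lia)); specialize (IH ltac:(lia)); lia.
Qed.

Definition Zsum (l : list Z) : Z := fold_right Z.add 0%Z l.

Lemma signed_sum_le (n : nat -> nat) (sigma : nat -> Z) (l : list nat) :
  (forall i, In i l -> sigma i = (-1)%Z \/ sigma i = 0%Z \/ sigma i = 1%Z) ->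
  (- Zsum (map (fun i => sigma i * Z.of_nat (n i)) l)
     <= Zsum (map (fun i => Z.of_nat (n i)) l))%Z.
Proof.
  induction l as [| j l IH]; intros Hsigma; simpl; [lia |].
  specialize (IH (fun i Hi => Hsigma i (or_intror Hi))).
  destruct (Hsigma j (or_introl eq_refl)) as [-> | [-> | ->]]; lia.
Qed.

Lemma Rsum_INR (n : nat -> nat) (l : list nat) :
  Rsum (map (fun i => INR (n i)) l) = IZR (Zsum (map (fun i => Z.of_nat (n i)) l)).
Proof.
  induction l as [| j l IH]; simpl; [reflexivity |].
  rewrite plus_IZR, <- IH, <- INR_IZR_INZ; reflexivity.
Qed.

Lemma cancelled_le_sum (m : nat) (n : nat -> nat) (sigma : nat -> Z) (l : list nat) :
  (forall i, In i l -> sigma i = (-1)%Z \/ sigma i = 0%Z \/ sigma i = 1%Z) ->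
  (Z.of_nat m + Zsum (map (fun i => sigma i * Z.of_nat (n i)) l) = 0)%Z ->
  INR m <= Rsum (map (fun i => INR (n i)) l).
Proof.
  intros Hsigma Hcancel.
  pose proof (signed_sum_le n sigma l Hsigma) as Hle.
  rewrite Rsum_INR, INR_IZR_INZ.
  apply IZR_le; lia.
Qed.

Theorem lemmaC1 (p : nat) (n : nat -> nat) (alpha : R) :
  (3 <= p)%nat ->
  (forall i, (1 <= i)%nat -> (i < p)%nat -> (n (S i) <= n i)%nat) ->
  (1 <= n p)%nat ->
  (exists sigma : nat -> Z,
      (forall i, (2 <= i)%nat -> (i <= p)%nat ->
         sigma i = (-1)%Z \/ sigma i = 0%Z \/ sigma i = 1%Z) /\
      (Z.of_nat (n 1%nat) +
         fold_right Z.add 0%Z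
           (map (fun i => (sigma i * Z.of_nat (n i))%Z) (seq 2 (p - 1))) = 0)%Z) ->
  0 < alpha < 1 ->
  fold_right Rplus 0 (map (fun i => Rpower (INR (n i)) alpha) (seq 2 (p - 1)))
    - Rpower (INR (n 1%nat)) alpha
  >= (2 - Rpower 2 alpha) *
     fold_right Rplus 0 (map (fun i => Rpower (INR (n i)) alpha) (seq 3 (p - 2))).
Proof.
  intros Hp Hstep Hnp [sigma [Hsigma Hcancel]] Halpha.
  pose proof (nonincreasing_on p n Hstep) as Hmon.
  set (rest := seq 3 (p - 2)).
  assert (Hseq : seq 2 (p - 1) = 2%nat :: rest)
    by (unfold rest; replace (p - 1)%nat with (S (p - 2)) by lia; reflexivity).
  assert (Hpos : forall i, (1 <= i <= p)%nat -> 0 < INR (n i)).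
  { intros i Hi; apply lt_0_INR; pose proof (Hmon i p ltac:(lia) ltac:(lia) ltac:(lia)); lia. }
  assert (Hrest : forall x, In x (map (fun i => INR (n i)) rest) -> 0 < x <= INR (n 2%nat)).
  { intros x Hx; apply in_map_iff in Hx; destruct Hx as [i [<- Hi]].
    apply in_seq in Hi; split; [apply Hpos; lia | apply le_INR, Hmon; lia]. }
  assert (Htri : INR (n 1%nat) <= INR (n 2%nat) + Rsum (map (fun i => INR (n i)) rest)).
  { rewrite Hseq in Hcancel.
    apply (cancelled_le_sum _ n sigma (2%nat :: rest)); [| exact Hcancel].
    intros i Hi; rewrite <- Hseq in Hi; apply in_seq in Hi; apply Hsigma; lia. }
  assert (Hmono := Rle_Rpower_l _ _ alpha ltac:(lra)
                     (conj (Hpos 1%nat ltac:(lia)) Htri)).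
  assert (Hconc := Rpower_add_list_le alpha _ ltac:(lra) _ Hrest).
  rewrite map_map in Hconc.
  rewrite Hseq; simpl.
  change (fold_right Rplus 0 (map (fun i => Rpower (INR (n i)) alpha) rest))
    with (Rsum (map (fun i => Rpower (INR (n i)) alpha) rest)).
  lra.
Qed.
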